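(* For every even integer $T\ge 6$ and every $\sigma\in\mathfrak S_3$, the vector $\sigma c$ with $c=[\tfrac32T-1,\ \tfrac T2,\ -\tfrac T2+1,\ -\tfrac T2+1,\ -\tfrac T2+1,\ \tfrac T2]$ defines a facet of $P^T$.
   Context: For an integer $T\ge 2$, let $\Omega_T$ be the set of words $w=s_1s_2\cdots s_T$ over $\{1,2,3\}$ with $s_l\neq s_{l+1}$ for $l=1,\dots,T-1$. For $w\in\Omega_T$ and an ordered pair $ij$, $i\neq j$, let $x_{ij}(w)$ be the number of indices $1\le l\le T-1$ with $s_ls_{l+1}=ij$. Vectors of $\mathbb R^6$ are indexed in the order $[x_{12},x_{13},x_{21},x_{23},x_{31},x_{32}]$. Let $a_w=[x_{12}(w),\dots,x_{32}(w)]$ and $P^T=\mathrm{conv}\{a_w:w\in\Omega_T\}$. $\mathfrak S_3$ acts on $\mathbb R^6$ by $(\sigma c)_{ij}=c_{\sigma(i)\sigma(j)}$. A vector $c$ defines a facet of $P^T$ if $c\cdot a_w\ge0$ for all $w\in\Omega_T$ and $\{x\in P^T: c\cdot x=0\}$ is a facet of $P^T$. *)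

From HB Require Import structures.
From mathcomp Require Import all_boot all_order all_algebra all_fingroup.
Set Implicit Arguments. Unset Strict Implicit. Unset Printing Implicit Defensive.
Import Order.TTheory GRing.Theory Num.Theory.
Local Open Scope ring_scope.

(* Letters 1,2,3 are encoded as the elements 0,1,2 of 'I_3. *)
Definition L1 : 'I_3 := @Ordinal 3 0 isT.
Definition L2 : 'I_3 := @Ordinal 3 1 isT.
Definition L3 : 'I_3 := @Ordinal 3 2 isT.

(* Coordinate order [x12,x13,x21,x23,x31,x32]. *)
Definition pairs : seq ('I_3 * 'I_3) :=
  [:: (L1, L2); (L1, L3); (L2, L1); (L2, L3); (L3, L1); (L3, L2)].

Definition pr (k : 'I_6) : 'I_3 * 'I_3 := nth (L1, L1) pairs k.

Definition pidx (i j : 'I_3) : 'I_6 := inord (index (i, j) pairs).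

Definition Omega (T : nat) (w : T.-tuple 'I_3) : bool :=
  [forall l : 'I_T.-1, nth L1 w l != nth L1 w l.+1].

Definition xcount (T : nat) (w : T.-tuple 'I_3) (i j : 'I_3) : nat :=
  (\sum_(l < T.-1) ((nth L1 w l == i) && (nth L1 w l.+1 == j)))%N.

Definition avec (R : pzRingType) (T : nat) (w : T.-tuple 'I_3) : 'rV[R]_6 :=
  \row_k (xcount w (pr k).1 (pr k).2)%:R.

Definition PT (R : realFieldType) (T : nat) : 'rV[R]_6 -> Prop :=
  fun x => exists lam : T.-tuple 'I_3 -> R,
    [/\ forall w, 0 <= lam w,
        forall w, ~~ Omega w -> lam w = 0,
        \sum_w lam w = 1 &
        x = \sum_w lam w *: avec R w].

Definition dotv (R : pzRingType) (c x : 'rV[R]_6) : R := \sum_k c 0 k * x 0 k.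

Definition sact (R : pzRingType) (s : {perm 'I_3}) (c : 'rV[R]_6) : 'rV[R]_6 :=
  \row_k c 0 (pidx (s (pr k).1) (s (pr k).2)).

Definition affindep (R : fieldType) (k : nat) (p : 'I_k.+1 -> 'rV[R]_6) : bool :=
  row_free (\matrix_(i < k) (p (lift ord0 i) - p ord0)).

Definition affdim_ge (R : fieldType) (X : 'rV[R]_6 -> Prop) (k : nat) : Prop :=
  exists p : 'I_k.+1 -> 'rV[R]_6, (forall i, X (p i)) /\ affindep p.

Definition has_affdim (R : fieldType) (X : 'rV[R]_6 -> Prop) (d : nat) : Prop :=
  affdim_ge X d /\ ~ affdim_ge X d.+1.

Definition defines_facet (R : realFieldType) (T : nat) (c : 'rV[R]_6) : Prop :=
  (forall w : T.-tuple 'I_3, Omega w -> 0 <= dotv c (avec R w)) /\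
  exists d : nat,
    has_affdim (@PT R T) d.+1 /\
    has_affdim (fun x => PT T x /\ dotv c x = 0) d.

Definition cvec (R : realFieldType) (T : nat) : 'rV[R]_6 :=
  let t := T%:R : R in
  \row_k nth 0 [:: 3 * t / 2 - 1; t / 2; - (t / 2) + 1; - (t / 2) + 1;
                  - (t / 2) + 1; t / 2] k.

From HB Require Import structures.
From mathcomp Require Import all_boot all_order all_algebra all_fingroup.
From mathcomp Require Import ring lra zify.
Import Order.TTheory GRing.Theory Num.Theory.
Local Open Scope ring_scope.

(* Relabelling the letters of the words by sigma permutes the coordinates of
   the transition counts, so it maps P^T onto itself and carries the facets of
   c to those of sigma c; hence sigma = 1 suffices.  Write T = 2n.  Every point
   of P^T has coordinate sum T - 1, and c = (2n - 1) w + (1 - n) (1,...,1) with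
   w = [2,1,0,0,0,1], so on P^T we get c.x = (2n - 1) (W(x) - (n - 1)) where
   W = 2 x12 + x13 + x32.  With the potential psi(1) = 0, psi(2) = 2,
   psi(3) = 1, every step i -> j of a word satisfies 2 W(ij) + psi(i) >= 1 + psi(j);
   summing along a word gives 2 W >= T - 1 - 2, hence W >= n - 1 by integrality.
   The words (31)^n, 21(31)^(n-1), 23(13)^(n-1), 32(31)^(n-1), 2312(31)^(n-2)
   have W = n - 1 and, together with (13)^n, give six affinely independent
   points of P^T.  Conversely P^T lies in the hyperplane of coordinate sum T - 1
   and the face moreover in W = n - 1, so their dimensions are 5 and 4. *)

Set Implicit Arguments.
Unset Strict Implicit.

Lemma pr_pidx (i j : 'I_3) : i != j -> pr (pidx i j) = (i, j).
Proof.
case: i => [[|[|[|i]]] Hi] //; case: j => [[|[|[|j]]] Hj] //= _;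
  by rewrite /pr /pidx /= inordK //; congr (_, _); apply: val_inj.
Qed.

Lemma pr_neq (k : 'I_6) : (pr k).1 != (pr k).2.
Proof. by case: k => [[|[|[|[|[|[|k]]]]]] Hk]. Qed.

Lemma pidx_pr (k : 'I_6) : pidx (pr k).1 (pr k).2 = k.
Proof. by case: k => [[|[|[|[|[|[|k]]]]]] Hk] //; apply/val_inj; rewrite /= inordK. Qed.

Definition relabel_coord (s : {perm 'I_3}) (k : 'I_6) : 'I_6 :=
  pidx (s (pr k).1) (s (pr k).2).

Lemma pr_relabel_coord s k : pr (relabel_coord s k) = (s (pr k).1, s (pr k).2).
Proof. by rewrite pr_pidx // (inj_eq perm_inj) pr_neq. Qed.

Lemma relabel_coordK s : cancel (relabel_coord s) (relabel_coord s^-1%g).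
Proof. by move=> k; rewrite {1}/relabel_coord pr_relabel_coord /= !permK pidx_pr. Qed.

Lemma relabel_coord_inj s : injective (relabel_coord s).
Proof. exact: can_inj (@relabel_coordK s). Qed.

Definition coord_perm (s : {perm 'I_3}) : 'S_6 := perm (@relabel_coord_inj s).

Lemma coord_permV s : ((coord_perm s)^-1 = coord_perm s^-1)%g.
Proof.
apply/permP => k; apply: (@perm_inj _ (coord_perm s)).
by rewrite permKV !permE -{1}[s]invgK relabel_coordK.
Qed.

Lemma sactE (R : pzRingType) s (c : 'rV[R]_6) : sact s c = col_perm (coord_perm s) c.
Proof. by apply/rowP => k; rewrite !mxE permE. Qed.

Section DotProduct.
Variable R : comPzRingType.
Implicit Types c x y : 'rV[R]_6.

Lemma dotvDr c x y : dotv c (x + y) = dotv c x + dotv c y.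
Proof. by rewrite /dotv -big_split; apply: eq_bigr => k _; rewrite mxE mulrDr. Qed.

Lemma dotvBr c x y : dotv c (x - y) = dotv c x - dotv c y.
Proof. by rewrite /dotv -sumrB; apply: eq_bigr => k _; rewrite !mxE mulrBr. Qed.

Lemma dotvZr c x a : dotv c (a *: x) = a * dotv c x.
Proof. by rewrite /dotv mulr_sumr; apply: eq_bigr => k _; rewrite mxE mulrCA. Qed.

Lemma dotv_col_perm (p : 'S_6) c x : dotv (col_perm p c) (col_perm p x) = dotv c x.
Proof. by rewrite [RHS](reindex_inj (@perm_inj _ p)); apply: eq_bigr => k _; rewrite !mxE. Qed.

End DotProduct.

Lemma ltn_ord_pred T (l : 'I_T.-1) : (l.+1 < T)%N.
Proof. by case: T l => [|T] []. Qed.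

Lemma nth_map_tuple T (f : 'I_3 -> 'I_3) (w : T.-tuple 'I_3) l :
  (l < T)%N -> nth L1 (map_tuple f w) l = f (nth L1 w l).
Proof. by move=> Hl; rewrite (set_nth_default (f L1)) ?size_tuple // (nth_map L1) ?size_tuple. Qed.

Lemma Omega_map T (f : 'I_3 -> 'I_3) (w : T.-tuple 'I_3) :
  injective f -> Omega (map_tuple f w) = Omega w.
Proof.
move=> f_inj; apply: eq_forallb => l.
by rewrite !nth_map_tuple ?(ltnW (ltn_ord_pred l)) ?ltn_ord_pred // (inj_eq f_inj).
Qed.

Lemma xcount_map T (f : 'I_3 -> 'I_3) (w : T.-tuple 'I_3) i j :
  injective f -> xcount (map_tuple f w) (f i) (f j) = xcount w i j.
Proof.
move=> f_inj; apply: eq_bigr => l _.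
by rewrite !nth_map_tuple ?(ltnW (ltn_ord_pred l)) ?ltn_ord_pred // !(inj_eq f_inj).
Qed.

Lemma Omega_path T (w : T.-tuple 'I_3) x t :
  tval w = x :: t -> Omega w = path (fun a b => a != b) x t.
Proof.
move=> Ew; have HT : T.-1 = size t by rewrite -(size_tuple w) Ew.
apply/forallP/(pathP L1) => [H l Hl | H l]; last by rewrite Ew H // -HT.
have Hl' : (l < T.-1)%N by rewrite HT.
by have := H (Ordinal Hl'); rewrite Ew.
Qed.

Lemma tuple_cons T (w : T.-tuple 'I_3) : (0 < T)%N ->
  exists x t, tval w = x :: t /\ (size t).+1 = T.
Proof. by case: w => [[|x t] /= /eqP <-] // _; exists x, t. Qed.

Section AffineDimension.
Variable R : fieldType.
Implicit Types X Y : 'rV[R]_6 -> Prop.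

Lemma row_free_col_perm m n (p : 'S_n) (A : 'M[R]_(m, n)) :
  row_free (col_perm p A) = row_free A.
Proof. by rewrite /row_free col_permE mxrankMfree // row_free_unit unitmx_perm. Qed.

Lemma affindep_col_perm k (p : 'S_6) (q : 'I_k.+1 -> 'rV[R]_6) :
  affindep (fun i => col_perm p (q i)) = affindep q.
Proof.
rewrite /affindep -[RHS](row_free_col_perm p); congr row_free.
by apply/matrixP => i j; rewrite !mxE.
Qed.

Lemma affdim_ge_col_perm X Y (p : 'S_6) k :
  (forall x, X x -> Y (col_perm p x)) -> affdim_ge X k -> affdim_ge Y k.
Proof.
move=> XY [q [Xq q_indep]]; exists (fun i => col_perm p (q i)).
by rewrite affindep_col_perm; split=> // i; apply: XY.
Qed.

Lemma has_affdim_col_perm X Y (p : 'S_6) d :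
  (forall x, X x -> Y (col_perm p x)) -> (forall y, Y y -> X (col_perm p^-1%g y)) ->
  has_affdim X d -> has_affdim Y d.
Proof.
move=> XY YX [Xd XnotSd]; split; first exact: affdim_ge_col_perm XY Xd.
by move/(affdim_ge_col_perm YX)/XnotSd.
Qed.

Lemma affdim_ge_codim X k r (A : 'M[R]_(r, 6)) (b : 'I_r -> R) :
  row_free A -> (forall x i, X x -> dotv (row i A) x = b i) ->
  affdim_ge X k -> (k + r <= 6)%N.
Proof.
move=> /eqP rkA XA [p [Xp /eqP rkD]]; rewrite -[k]rkD -[r]rkA -(mxrank_tr A).
apply: mulmx0_rank_max; apply/matrixP => i j; rewrite !mxE.
transitivity (dotv (row j A) (p (lift ord0 i) - p ord0)).
  by apply: eq_bigr => l _; rewrite !mxE mulrC.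
by rewrite dotvBr !XA // subrr.
Qed.

Lemma affindep_translate k (p q : 'I_k.+1 -> 'rV[R]_6) v :
  (forall i, q i = p i + v) -> affindep q = affindep p.
Proof.
move=> Dq; rewrite /affindep; congr row_free; apply/matrixP => i j.
by rewrite !mxE !Dq !mxE opprD addrACA subrr addr0.
Qed.

Lemma affindep_widen k (p : 'I_k.+2 -> 'rV[R]_6) :
  affindep p -> affindep (fun i : 'I_k.+1 => p (widen_ord (leqnSn k.+1) i)).
Proof.
case/row_freeP => B DB; apply/row_freeP.
exists (\matrix_(l, j) B l (widen_ord (leqnSn k) j)); apply/matrixP => i j.
have := congr1 (fun M : 'M[R]_k.+1 => M (widen_ord (leqnSn k) i) (widen_ord (leqnSn k) j)) DB.
rewrite !mxE => <-; apply: eq_bigr => l _; rewrite !mxE.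
by congr ((p _ 0 l - p _ 0 l) * _); apply: val_inj.
Qed.

Definition mx_of_seqs p q (l : seq (seq R)) : 'M[R]_(p, q) :=
  \matrix_(i, j) nth 0 (nth [::] l i) j.

End AffineDimension.

Section Relabel.
Variable R : realFieldType.

Lemma col_perm_avec_map T (s : {perm 'I_3}) (w : T.-tuple 'I_3) :
  col_perm (coord_perm s) (avec R (map_tuple s w)) = avec R w.
Proof. by apply/rowP => k; rewrite !mxE permE pr_relabel_coord xcount_map //; exact: perm_inj. Qed.

Lemma PT_col_perm T (s : {perm 'I_3}) (x : 'rV[R]_6) :
  PT T x -> PT T (col_perm (coord_perm s) x).
Proof.
have map_inj : injective (map_tuple s : T.-tuple 'I_3 -> _).
  by move=> u v /(congr1 val)/(inj_map (@perm_inj _ s))/val_inj.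
case=> lam [lam_ge0 lam_Omega lam_sum ->].
exists (fun w => lam (map_tuple s w)); split => //.
- by move=> w Hw; apply: lam_Omega; rewrite Omega_map //; exact: perm_inj.
- by rewrite -lam_sum [RHS](reindex_inj map_inj).
rewrite linear_sum [LHS](reindex_inj map_inj); apply: eq_bigr => w _.
by rewrite linearZ /= col_perm_avec_map.
Qed.

Lemma defines_facet_sact T (s : {perm 'I_3}) (c : 'rV[R]_6) :
  defines_facet T c -> defines_facet T (sact s c).
Proof.
rewrite sactE; set p := coord_perm s.
have dotv_pV x : dotv (col_perm p c) x = dotv c (col_perm p^-1%g x).
  by rewrite -[RHS](dotv_col_perm p) -col_permM mulgV col_perm1.
case=> c_ge0 [d [HP Hface]]; split.
  move=> w Hw; rewrite -(col_perm_avec_map s w) -/p dotv_col_perm.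
  by apply: c_ge0; rewrite Omega_map //; exact: perm_inj.
exists d; split=> //; apply: (has_affdim_col_perm (p := p)) Hface.
  by move=> x [Px cx0]; rewrite dotv_col_perm; split=> //; apply: PT_col_perm.
move=> y [Py cy0]; rewrite -dotv_pV; split=> //.
by rewrite /p coord_permV; apply: PT_col_perm.
Qed.

End Relabel.

Section Transitions.
Variable R : realFieldType.

Definition edge_vec (x y : 'I_3) : 'rV[R]_6 :=
  \row_k ((x == (pr k).1) && (y == (pr k).2))%:R.

Fixpoint transitions (s : seq 'I_3) : 'rV[R]_6 :=
  if s is x :: ((y :: _) as t) then edge_vec x y + transitions t else 0.

Lemma transitions_cons2 x y t :
  transitions [:: x, y & t] = edge_vec x y + transitions (y :: t).
Proof. by []. Qed.

Lemma transitions1 x : transitions [:: x] = 0.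
Proof. by []. Qed.

Lemma transitionsE s k : transitions s 0 k =
  (\sum_(l < (size s).-1) ((nth L1 s l == (pr k).1) && (nth L1 s l.+1 == (pr k).2)))%:R.
Proof.
elim: s => [|x [|y t] IH]; [by rewrite big_ord0 mxE | by rewrite big_ord0 mxE |].
by rewrite transitions_cons2 mxE IH big_ord_recl natrD !mxE (eq_sym x) (eq_sym y).
Qed.

Lemma transitions_count s k :
  transitions s 0 k = (count_mem (pr k) (zip s (behead s)))%:R.
Proof.
elim: s => [|x [|y t] IH]; [by rewrite mxE | by rewrite mxE |].
rewrite transitions_cons2 mxE IH /= natrD !mxE.
by case: (pr k) => a b; rewrite xpair_eqE.
Qed.

Lemma avec_transitions T (w : T.-tuple 'I_3) : avec R w = transitions w.
Proof. by apply/rowP => k; rewrite transitionsE !mxE size_tuple. Qed.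

Lemma PT_avec T (w : T.-tuple 'I_3) : Omega w -> PT T (avec R w).
Proof.
move=> Hw; exists (fun v => (v == w)%:R); split.
- by move=> v; rewrite ler0n.
- by move=> v; case: eqP => // ->; rewrite Hw.
- by rewrite (bigD1 w) //= eqxx big1 ?addr0 // => v /negbTE ->.
by rewrite (bigD1 w) //= eqxx scale1r big1 ?addr0 // => v /negbTE ->; rewrite scale0r.
Qed.

Lemma PT_transitions T x t :
  (size t).+1 = T -> path (fun a b => a != b) x t -> PT T (transitions (x :: t)).
Proof.
move=> <- Hp; rewrite -[x :: t]/(tval (in_tuple (x :: t))) -avec_transitions.
by apply: PT_avec; rewrite (Omega_path (x := x) (t := t)).
Qed.

Lemma dotv_PT T (c : 'rV[R]_6) v x :
  (forall w : T.-tuple 'I_3, Omega w -> dotv c (avec R w) = v) -> PT T x -> dotv c x = v.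
Proof.
move=> Hc [lam [_ lam_Omega lam_sum ->]].
transitivity (\sum_w lam w * dotv c (avec R w)).
  rewrite /dotv; under eq_bigr => k _ do rewrite summxE mulr_sumr.
  rewrite exchange_big; apply: eq_bigr => w _; rewrite mulr_sumr.
  by apply: eq_bigr => k _; rewrite mxE mulrCA.
rewrite -[RHS]mul1r -lam_sum mulr_suml; apply: eq_bigr => w _.
by have [/Hc ->|/lam_Omega ->] := boolP (Omega w); rewrite ?mul0r.
Qed.

Definition weight_coef : 'rV[R]_6 := \row_k [:: 2; 1; 0; 0; 0; 1]`_k.
Definition weight (x : 'rV[R]_6) : R := dotv weight_coef x.
Definition total (x : 'rV[R]_6) : R := dotv (const_mx 1) x.

Lemma total_edge x y : x != y -> total (edge_vec x y) = 1.
Proof.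
case: x => [[|[|[|x]]] Hx] //; case: y => [[|[|[|y]]] Hy] //= _;
  rewrite /total /dotv !big_ord_recr big_ord0 /= !mxE /=; lra.
Qed.

Lemma total_path x t :
  path (fun a b => a != b) x t -> total (transitions (x :: t)) = (size t)%:R.
Proof.
elim: t x => [|y t IH] x /=.
  by move=> _; rewrite /total /dotv big1 // => k _; rewrite !mxE mulr0.
by case/andP => /total_edge Hxy /IH Hyt; rewrite /total dotvDr -!/(total _) Hxy Hyt -nat1r.
Qed.

Lemma total_PT T x : (0 < T)%N -> PT T x -> total x = (T.-1)%:R.
Proof.
move=> T_gt0; apply: dotv_PT => w Hw; have [x0 [t [Ew Hsize]]] := tuple_cons w T_gt0.
by rewrite -/(total _) avec_transitions Ew total_path -?(Omega_path Ew) // -Hsize.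
Qed.

Definition potential (a : 'I_3) : nat := nth 0 [:: 0; 2; 1]%N a.

Lemma potential_step x y : x != y ->
  (1 + potential y)%:R <= 2 * weight (edge_vec x y) + (potential x)%:R.
Proof.
case: x => [[|[|[|x]]] Hx] //; case: y => [[|[|[|y]]] Hy] //= _;
  rewrite /weight /potential /dotv !big_ord_recr big_ord0 /= !mxE /=; lra.
Qed.

Lemma potential_path x t : path (fun a b => a != b) x t ->
  (size t + potential (last x t))%:R <= 2 * weight (transitions (x :: t)) + (potential x)%:R.
Proof.
elim: t x => [|y t IH] x /=.
  by move=> _; rewrite /weight /dotv big1 => [|k _]; rewrite ?mxE; lra.
case/andP => /potential_step Hxy /IH Hyt; rewrite /weight dotvDr -!/(weight _).
by move: Hxy Hyt; rewrite !natrD; lra.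
Qed.

Lemma weight_avec_ge n (w : (n * 2).-tuple 'I_3) : (0 < n)%N -> Omega w ->
  n%:R - 1 <= weight (avec R w).
Proof.
move=> n_gt0 Hw; have T_gt0 : (0 < n * 2)%N by rewrite muln_gt0 n_gt0.
have [x [t [Ew Hsize]]] := tuple_cons w T_gt0.
have := potential_path (etrans (esym (Omega_path Ew)) Hw); rewrite -Ew -avec_transitions.
have [N ->] : exists N, weight (avec R w) = N%:R.
  exists (2 * xcount w L1 L2 + xcount w L1 L3 + xcount w L3 L2)%N.
  by rewrite /weight /dotv !big_ord_recr big_ord0 /= !mxE /= !natrD; ring.
have potential_le2 a : (potential a <= 2)%N by case: a => [[|[|[|]]]].
move=> H; have {H} : (size t + potential (last x t) <= 2 * N + potential x)%N.
  by rewrite -(ler_nat R) !natrD; move: H; rewrite natrD; lra.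
rewrite lerBlDr natr1 ler_nat.
by move: (potential_le2 x) (potential_le2 (last x t)); lia.
Qed.

End Transitions.

Section Facet.
Variable R : realFieldType.

Lemma natr_double_pred n : (0 < n)%N -> ((n * 2).-1)%:R = n%:R * 2 - 1 :> R.
Proof. by move=> n_gt0; rewrite -subn1 natrB ?natrM // muln_gt0 n_gt0. Qed.

Lemma dotv_cvec n x : dotv (cvec R (n * 2)) x =
  (n%:R * 2 - 1) * weight x + (1 - n%:R) * total x.
Proof. by rewrite /weight /total /dotv !big_ord_recr !big_ord0 /= !mxE /= natrM; field. Qed.

Lemma dotv_cvec_PT n x : (0 < n)%N -> PT (n * 2) x ->
  dotv (cvec R (n * 2)) x = (n%:R * 2 - 1) * (weight x - (n%:R - 1)).
Proof.
move=> n_gt0 Px; rewrite dotv_cvec (total_PT _ Px) ?muln_gt0 ?n_gt0 //.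
by rewrite natr_double_pred //; ring.
Qed.

Lemma dotv_cvec_avec_ge0 n (w : (n * 2).-tuple 'I_3) : (0 < n)%N -> Omega w ->
  0 <= dotv (cvec R (n * 2)) (avec R w).
Proof.
move=> n_gt0 Hw; rewrite dotv_cvec_PT //; last exact: PT_avec.
have n_ge1 : 1 <= n%:R :> R by rewrite ler1n.
have W_ge := weight_avec_ge R n_gt0 Hw.
by apply: mulr_ge0; lra.
Qed.

Lemma dotv_cvec_eq0 n x : (0 < n)%N -> PT (n * 2) x ->
  (dotv (cvec R (n * 2)) x = 0) <-> (weight x = n%:R - 1).
Proof.
move=> n_gt0 Px; rewrite dotv_cvec_PT //.
have n_ge1 : 1 <= n%:R :> R by rewrite ler1n.
have n2_neq0 : n%:R * 2 - 1 != 0 :> R by apply: lt0r_neq0; lra.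
split=> [/eqP|->]; last by rewrite subrr mulr0.
by rewrite mulf_eq0 (negbTE n2_neq0) subr_eq0 => /eqP.
Qed.

Lemma PT_not_affdim_ge6 T : (0 < T)%N -> ~ affdim_ge (@PT R T) 6.
Proof.
move=> T_gt0 P6; suff : (6 + 1 <= 6)%N by [].
apply: (affdim_ge_codim (A := const_mx 1) (b := fun=> (T.-1)%:R) _ _ P6).
  rewrite /row_free eqn_leq rank_leq_row lt0n mxrank_eq0.
  by apply/eqP => /matrixP/(_ 0 0)/eqP; rewrite !mxE oner_eq0.
by move=> x i Px; rewrite row_const; exact: total_PT.
Qed.

Lemma face_not_affdim_ge5 n : (0 < n)%N ->
  ~ affdim_ge (fun x => PT (n * 2) x /\ dotv (cvec R (n * 2)) x = 0) 5.
Proof.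
move=> n_gt0 F5; suff : (5 + 2 <= 6)%N by [].
pose A : 'M[R]_(2, 6) := \matrix_(i < 2) nth 0 [:: const_mx 1; weight_coef R] i.
apply: (affdim_ge_codim (A := A) (b := fun i => nth 0 [:: (n * 2).-1%:R; n%:R - 1] i) _ _ F5).
  apply/row_freeP; exists (mx_of_seqs 6 2 [:: [:: 0; 0]; [:: 0; 1]; [:: 1; -1]]).
  apply/matrixP => i j; rewrite !mxE !big_ord_recr big_ord0 /= !mxE.
  by case: i => [[|[|]]] //= Hi; case: j => [[|[|]]] //= Hj; rewrite !mxE /=; ring.
move=> x i [Px /(dotv_cvec_eq0 n_gt0 Px) Wx]; rewrite rowK.
by case: i => [[|[|]]] //= _; apply: total_PT; rewrite ?muln_gt0 ?n_gt0.
Qed.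

Fixpoint alt (a b : 'I_3) k : seq 'I_3 :=
  if k is k'.+1 then [:: a, b & alt a b k'] else [::].

Lemma size_alt a b k : size (alt a b k) = (k * 2)%N.
Proof. by elim: k => //= k ->. Qed.

Lemma path_alt a b k : a != b -> path (fun u v => u != v) b (alt a b k).
Proof. by move=> ab; elim: k => //= k ->; rewrite eq_sym ab. Qed.

Definition pump x s a b k : seq 'I_3 := x :: s ++ alt a b k.

Lemma transitions_pump x s a b k : last x s = b ->
  transitions R (pump x s a b k) =
  transitions R (x :: s) + k%:R *: (edge_vec R a b + edge_vec R b a).
Proof.
rewrite /pump; elim: s x => [|y s IH] x.
  rewrite [last _ _]/= cat0s => ->; rewrite transitions1 add0r.
  elim: k => [|k IHk]; first by rewrite scale0r.
  rewrite !transitions_cons2 IHk -nat1r scalerDl scale1r.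
  by rewrite addrA (addrC (edge_vec R b a)).
by rewrite cat_cons !transitions_cons2 => /IH ->; rewrite addrA.
Qed.

Lemma PT_pump T x s a b k :
  a != b -> last x s = b -> path (fun u v => u != v) x s ->
  ((size s).+1 + k * 2)%N = T -> PT T (transitions R (pump x s a b k)).
Proof.
move=> ab last_b xs <-; apply: PT_transitions; first by rewrite size_cat size_alt.
by rewrite cat_path xs last_b path_alt.
Qed.

Definition word m (i : 'I_6) : seq 'I_3 :=
  nth [::] [:: pump L3 [:: L1; L3; L1; L3; L1] L3 L1 m;
               pump L2 [:: L1; L3; L1; L3; L1] L3 L1 m;
               pump L2 [:: L3; L1; L3; L1; L3] L1 L3 m;
               pump L3 [:: L2; L3; L1; L3; L1] L3 L1 m;
               pump L2 [:: L3; L1; L2; L3; L1] L3 L1 m;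
               pump L1 [:: L3; L1; L3; L1; L3] L1 L3 m] i.

Definition vertex m i : 'rV[R]_6 := transitions R (word m i).

Lemma PT_vertex m i : PT (m.+3 * 2) (vertex m i).
Proof.
rewrite /vertex /word.
by case: i => [[|[|[|[|[|[|]]]]]]] Hi //; apply: PT_pump => //; lia.
Qed.

Lemma vertex_shift m i :
  vertex m i = vertex 0 i + m%:R *: (edge_vec R L1 L3 + edge_vec R L3 L1).
Proof.
rewrite /vertex /word; case: i => [[|[|[|[|[|[|]]]]]]] Hi //;
  by rewrite !transitions_pump // scale0r addr0 ?(addrC (edge_vec R L3 L1)).
Qed.

Lemma affindep_vertex m : affindep (vertex m).
Proof.
rewrite (affindep_translate (p := vertex 0)
  (v := m%:R *: (edge_vec R L1 L3 + edge_vec R L3 L1))); last exact: vertex_shift.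
apply/row_freeP; exists (mx_of_seqs 6 5 [:: [:: 0; -2; 0; 1; 2]; [:: 0; 0; 0; 0; 1];
  [:: 1; 0; 0; 0; 0]; [:: 0; 1; 0; 0; 0]; [:: 0; 0; 0; 0; 0]; [:: 0; -1; 1; 0; 1]]).
apply/matrixP => i j; rewrite !mxE !big_ord_recr big_ord0 /= !mxE.
rewrite /vertex /word /pump /= !transitions_count /=.
by case: i => [[|[|[|[|[|]]]]]] Hi //; case: j => [[|[|[|[|[|]]]]]] Hj //=; ring.
Qed.

Lemma weight_vertex m (i : 'I_5) :
  weight (vertex m (widen_ord (leqnSn 5) i)) = m.+2%:R.
Proof.
rewrite -[m.+2]addn2 natrD /vertex /word.
case: i => [[|[|[|[|[|]]]]]] Hi //; rewrite transitions_pump // /weight dotvDr dotvZr;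
  by rewrite /dotv !big_ord_recr !big_ord0 !transitions_count /= !mxE /=; ring.
Qed.

Lemma defines_facet_cvec m : defines_facet (m.+3 * 2) (cvec R (m.+3 * 2)).
Proof.
split=> [w|]; first exact: dotv_cvec_avec_ge0.
exists 4%N; split; split.
- by exists (vertex m); split; [exact: PT_vertex | exact: affindep_vertex].
- exact: PT_not_affdim_ge6.
- exists (fun i => vertex m (widen_ord (leqnSn 5) i)).
  split; last exact: affindep_widen (affindep_vertex m).
  move=> i; split; first exact: PT_vertex.
  apply/dotv_cvec_eq0 => //; first exact: PT_vertex.
  by rewrite weight_vertex -[m.+3]addn1 natrD addrK.
- exact: face_not_affdim_ge5.
Qed.

End Facet.

Unset Implicit Arguments.
Set Strict Implicit.

Theorem proposition10 (R : realFieldType) (T : nat) (s : {perm 'I_3}) :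
  (6 <= T)%N -> ~~ odd T -> defines_facet T (sact s (cvec R T)).
Proof.
move=> T_ge6 T_even; apply: defines_facet_sact.
have -> : T = ((T./2 - 3).+3 * 2)%N.
  by move: (odd_double_half T); rewrite (negbTE T_even) add0n -muln2; lia.
exact: defines_facet_cvec.
Qed.
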